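(* Let $X$ be a $0$-dimensional space. Then every compact subset of $(\mathbb T^{(X)},t_c(C(X,\mathbb Z)))$ has finite support, i.e. if $D\subseteq\mathbb T^{(X)}$ is compact then $\bigcup_{w\in D}\operatorname{supp}w$ is finite.
   Context: Spaces are Tikhonov; $0$-dimensional means having a base of clopen sets. $C(X,\mathbb Z)$ is the group of continuous functions $X\to\mathbb Z$ ($\mathbb Z$ discrete); $C_p(X,\mathbb Z)$ is this group with the topology of pointwise convergence. $\mathbb T$ is the circle group. $\mathbb T^{(X)}$ is the group of finitely supported families $w=(t_x)_{x\in X}$ with $t_x\in\mathbb T$; each such $w$ acts as a character of $C_p(X,\mathbb Z)$ by $f\mapsto\prod_x t_x^{f(x)}$ (multiplicative notation), and this identifies $\mathbb T^{(X)}$ with the dual group of $C_p(X,\mathbb Z)$. $t_c(C(X,\mathbb Z))$ denotes the compact-open topology on $\mathbb T^{(X)}$, i.e. uniform convergence on compact subsets of $C_p(X,\mathbb Z)$. The support of $w=(t_x)$ is $\operatorname{supp}w=\{x\in X:t_x\neq1\}$. *)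

From HB Require Import structures.
From mathcomp Require Import all_boot all_order all_algebra.
From mathcomp Require Import all_classical all_reals all_analysis.
Set Implicit Arguments. Unset Strict Implicit. Unset Printing Implicit Defensive.
Import Order.TTheory GRing.Theory Num.Theory.
Local Open Scope classical_set_scope.
Local Open Scope ring_scope.

Definition clopen_base (X : topologicalType) : Prop :=
  forall (x : X) (U : set X), open U -> U x ->
    exists V : set X, [/\ clopen V, V x & V `<=` U].

(* Z with the discrete topology; C_p(X,Z) lives in {ptws X -> Zd}. *)
Definition Zd := discrete_topology int.

Definition in_CXZ (X : topologicalType) (f : {ptws X -> Zd}) : Prop :=
  continuous (f : X -> Zd).

Definition Cp_compact (X : topologicalType) (K : set {ptws X -> Zd}) : Prop :=
  K `<=` in_CXZ (X:=X) /\ compact K.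

(* The circle group T = R/Z, represented by the unique representative in [0,1);
   additively written, so the unit 1 of T corresponds to 0. *)
Definition circle (R : realType) := {t : R | (0 <= t) && (t < 1)}.

(* distance in T = R/Z between the classes of a and b: distance of a - b to Z *)
Definition Tdist (R : realType) (a b : R) : R :=
  Num.min ((a - b) - (Num.floor (a - b))%:~R) ((Num.ceil (a - b))%:~R - (a - b)).

Definition supp (R : realType) (X : Type) (w : X -> circle R) : set X :=
  [set x | sval (w x) != 0].

Definition finsupp (R : realType) (X : Type) (w : X -> circle R) : Prop :=
  finite_set (supp w).

(* value of the character w at f, as a real representative of an element of T:
   prod_x t_x^{f(x)} in multiplicative notation = sum_x t_x f(x) mod 1 *)
Definition charval (R : realType) (X : choiceType) (w : X -> circle R)
  (f : X -> int) : R :=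
  (\sum_(x \in supp w) sval (w x) * (f x)%:~R)%R.

(* basic neighbourhood of w in t_c(C(X,Z)): uniform closeness on compact K *)
Definition tc_ball (R : realType) (X : topologicalType)
  (K : set {ptws X -> Zd}) (eps : R) (w v : X -> circle R) : Prop :=
  forall f : {ptws X -> Zd}, K f -> Tdist (charval v f) (charval w f) < eps.

(* open sets of (T^(X), t_c(C(X,Z))), as subsets of the ambient type;
   only their traces on finitely supported families matter *)
Definition tc_open (R : realType) (X : topologicalType)
  (U : set (X -> circle R)) : Prop :=
  forall w, finsupp w -> U w ->
    exists (K : set {ptws X -> Zd}) (eps : R),
      [/\ Cp_compact K, 0 < eps &
          forall v, finsupp v -> tc_ball K eps w v -> U v].

Definition tc_compact (R : realType) (X : topologicalType)
  (D : set (X -> circle R)) : Prop :=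
  D `<=` finsupp (R:=R) (X:=X) /\
  forall (I : Type) (U : I -> set (X -> circle R)),
    (forall i, tc_open (U i)) -> D `<=` \bigcup_i U i ->
    exists2 J : set I, finite_set J & D `<=` \bigcup_(i in J) U i.

(* Suppose the union S of the supports of the members of D is infinite.
   Since X is Hausdorff and zero-dimensional, a decreasing sequence of clopen
   sets meeting S in infinitely many points yields pairwise disjoint clopen
   sets U_n, points y_n in U_n and w_n in D such that y_n is the only point of
   supp w_n in U_n.  Choose integers m_n such that m_n t_n, with t_n the
   y_n-coordinate of w_n, lies at distance at least 1/4 from Z.  The functions
   f_n = m_n 1_{U_n} tend pointwise to 0, so K = {0} u {f_n} is a compact
   subset of C_p(X,Z) lying in C(X,Z).  Covering D by the t_c-open balls of
   radius 1/4 on K around its own members and extracting a finite subcover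
   gives finitely many centres v, whose supports form a finite set F.  For
   large N the set U_N misses F, so v(f_N) = 0 for every centre v, whereas
   w_N(f_N) = m_N t_N: hence w_N lies in none of the balls. *)

From mathcomp Require Import all_boot all_order all_algebra.
From mathcomp Require Import all_classical all_reals all_analysis.
From mathcomp Require Import ring lra.
Set Implicit Arguments. Unset Strict Implicit.
Unset Printing Implicit Defensive.
Import Order.TTheory GRing.Theory Num.Theory.
Local Open Scope classical_set_scope.
Local Open Scope ring_scope.

Section DistanceToIntegers.
Variable R : realType.

Definition distZ (x : R) : R :=
  Num.min (x - (Num.floor x)%:~R) ((Num.ceil x)%:~R - x).

Lemma TdistE (a b : R) : Tdist a b = distZ (a - b). Proof. by []. Qed.

Lemma distZ_le (x : R) (k : int) : distZ x <= `|x - k%:~R|.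
Proof.
rewrite /distZ; have [kl|kg] := lerP k (Num.floor x).
  have h1 : (k%:~R : R) <= (Num.floor x)%:~R by rewrite ler_int.
  have h2 := floor_le x.
  rewrite ger0_norm ?subr_ge0; last lra.
  rewrite ge_min; apply/orP; left; lra.
have h : Num.ceil x <= k.
  rewrite ceil_floor; move: kg; rewrite -lezD1 => kg.
  by apply: le_trans kg; rewrite lerD2l; case: (x \isn't a Num.int_num).
have h1 : (Num.ceil x)%:~R <= (k%:~R : R) by rewrite ler_int.
have h2 := ceil_ge x.
rewrite ler0_norm ?subr_le0; last lra.
rewrite ge_min; apply/orP; right; lra.
Qed.

Lemma distZ_attained (x : R) : exists k : int, distZ x = `|x - k%:~R|.
Proof.
rewrite /distZ; have h1 := floor_le x; have h2 := ceil_ge x.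
case: (leP (x - (Num.floor x)%:~R) ((Num.ceil x)%:~R - x)) => _.
  by exists (Num.floor x); rewrite ger0_norm // subr_ge0.
by exists (Num.ceil x); rewrite ler0_norm ?opprB // subr_le0.
Qed.

Lemma distZ0 : distZ 0 = 0.
Proof. by rewrite /distZ floor0 ceil0 !subrr minxx. Qed.

Lemma distZD (x y : R) : distZ (x + y) <= distZ x + distZ y.
Proof.
have [kx ->] := distZ_attained x; have [ky ->] := distZ_attained y.
apply: le_trans (distZ_le _ (kx + ky)) _.
rewrite intrD opprD addrACA; exact: ler_normD.
Qed.

Lemma Tdist_triangle (a b c : R) : Tdist a c <= Tdist a b + Tdist b c.
Proof.
by rewrite !TdistE; have := distZD (a - b) (b - c); rewrite addrA subrK.
Qed.

Lemma distZ_ge_quarter (x : R) (k : int) :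
  k%:~R + 1/4 <= x -> x <= k%:~R + 3/4 -> 1/4 <= distZ x.
Proof.
move=> h1 h2; have [k' ->] := distZ_attained x.
have [kl|kg] := lerP k' k.
  have : (k'%:~R : R) <= k%:~R by rewrite ler_int.
  by move=> h; rewrite ger0_norm; lra.
have : (k%:~R : R) + 1 <= k'%:~R by rewrite -intrD1 ler_int -lezD1 in kg *.
by move=> h; rewrite ler0_norm; lra.
Qed.

Lemma int_multiple_far_from_int (t : R) : 0 < t < 1 ->
  exists m : int, 1/4 <= distZ (m%:~R * t).
Proof.
(* For 0 < s <= 1/2 the first multiple of s beyond 1/4 is at most 1/4 + s;
   for t > 1/2 use s = 1 - t, as -m t = m s - m. *)
have small (s : R) : 0 < s -> s <= 1/2 ->
    exists m : int, 1/4 <= m%:~R * s /\ m%:~R * s <= 3/4.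
  move=> s0 s2; exists (Num.floor (1/(4*s)) + 1).
  have a1 := floor_le (1/(4*s)); have a2 := floorD1_gt (1/(4*s)).
  rewrite intrD /= in a2 *.
  set f := (Num.floor (1 / (4 * s)))%:~R in a1 a2 *.
  have e : 1/(4*s) * s = 1/4 by field; lra.
  have b1 : f * s <= 1/4 by rewrite -e; apply: ler_wpM2r => //; exact: ltW.
  have b2 : 1/4 < (f + 1) * s by rewrite -e ltr_pM2r.
  split; lra.
move=> /andP[t0 t1]; have [th|th] := lerP t (1/2).
  have [m [h1 h2]] := small t t0 th; exists m.
  by apply: (@distZ_ge_quarter _ 0); rewrite add0r.
have [m [h1 h2]] := small (1 - t) ltac:(lra) ltac:(lra).
exists (- m); apply: (@distZ_ge_quarter _ (- m)); rewrite !intrN; lra.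
Qed.

End DistanceToIntegers.

Lemma near_forall_finite (T : Type) (I : choiceType) (F : set_system T)
    (A : set I) (P : I -> set T) : Filter F -> finite_set A ->
  (forall i, A i -> F (P i)) -> F (fun t => forall i, A i -> P i t).
Proof.
move=> FF /finite_fsetP[B ->] FP.
by apply: filterS (filter_bigI FF FP) => t Pt i /Pt.
Qed.

Lemma trivIset_eventually_notin (T : Type) (U : nat -> set T) (x : T) :
  trivIset setT U -> \forall n \near \oo, ~ U n x.
Proof.
move=> tU; have [[k Ukx]|nU] := pselect (exists k, U k x); last first.
  by apply: nearW => n Unx; apply: nU; exists n.
apply: filterS (nbhs_infty_gt k) => n kn Unx.
have kn_eq : k = n by apply: tU => //; exists x.
by rewrite kn_eq ltnn in kn.
Qed.

Lemma trivIset_nonincreasing_diff (T : Type) (C : nat -> set T) :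
  (forall n, C n.+1 `<=` C n) -> trivIset setT (fun n => C n `\` C n.+1).
Proof.
move=> decC; have sub k n : (n <= k)%N -> C k `<=` C n.
  elim: k => [|k ih]; first by rewrite leqn0 => /eqP ->.
  by rewrite leq_eqVlt => /predU1P[-> //|/ih]; apply: subset_trans.
apply/trivIsetP => i j _ _ ij; apply/seteqP; split => // x.
move=> [[Cix nCi1x] [Cjx nCj1x]].
case: (ltngtP i j) ij => // [ij|ji] _.
- by apply: nCi1x; exact: sub ij _ Cjx.
- by apply: nCj1x; exact: sub ji _ Cix.
Qed.

Lemma compact_cvg_range (T : topologicalType) (f : nat -> T) (l : T) :
  f @ \oo --> l -> compact ([set l] `|` range f).
Proof.
move=> fl F PF FK; have [|] := pselect (cluster F l).
  by exists l; split => //; left.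
move=> /existsNP[A /existsNP[B /not_implyP[FA /not_implyP[Bl AB]]]].
have [N _ fB] := fl B Bl.
have finA : finite_set (A `&` ([set l] `|` range f)).
  apply: sub_finite_set (finite_image f (finite_II N)) => g [Ag [gl|[n _ fng]]].
    exfalso; apply: AB; exists g; split => //.
    by rewrite gl; exact: nbhs_singleton Bl.
  exists n => //; rewrite /= ltnNge; apply/negP => Nn.
  by apply: AB; exists g; split; rewrite // -fng; exact: fB.
have [g [[_ Kg] Fg]] := finite_compact finA PF (filterI FA FK).
by exists g.
Qed.

Section ZeroDimensional.
Variable X : topologicalType.
Hypothesis hX : hausdorff_space X.
Hypothesis zX : clopen_base X.

Lemma clopen_separation (a b : X) : a <> b ->
  exists V, [/\ clopen V, V a & ~ V b].
Proof.
move=> ab; have : ~ cluster (nbhs a) b by move=> /hX.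
move=> /existsNP[A /existsNP[B /not_implyP[nA /not_implyP[nB AB]]]].
have [V [cV Va VA]] := zX (open_interior A) nA.
exists V; split => // Vb; apply: AB; exists b; split.
  exact: interior_subset (VA _ Vb).
exact: nbhs_singleton.
Qed.

Lemma clopen_isolation (F : set X) (y : X) : finite_set F ->
  exists W, [/\ clopen W, W y & forall z, F z -> W z -> z = y].
Proof.
move=> fF; pose G := filter_from [set V : set X | clopen V /\ V y] id.
have GF : Filter G.
  apply: filter_from_filter; first by exists setT; split => //; exact: clopenT.
  move=> V W [cV Vy] [cW Wy]; exists (V `&` W) => //.
  by split; [exact: clopenI|].
have G_avoid z : G [set t | z <> y -> t <> z].
  have [->|zy] := pselect (z = y).
    by exists setT => [|t _ /(_ erefl)] //; split => //; exact: clopenT.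
  have [V [cV Vy nVz]] := clopen_separation (nesym zy).
  by exists V => // t Vt _ tz; apply: nVz; rewrite -tz.
have [W [cW Wy] WF] := near_forall_finite GF fF (fun z _ => G_avoid z).
exists W; split => // z Fz Wz; apply: contrapT => zy.
exact: (WF z Wz z Fz zy).
Qed.

Lemma clopen_split_infinite (S C : set X) :
  clopen C -> infinite_set (C `&` S) ->
  exists C', [/\ clopen C', C' `<=` C, infinite_set (C' `&` S)
    & (C `\` C') `&` S !=set0].
Proof.
move=> cC iCS; have [a [Ca Sa]] := infinite_setN0 iCS.
have [b [[Cb Sb] ba]] := infinite_setN0 (infinite_setD iCS (finite_set1 a)).
have [V [cV Va nVb]] := clopen_separation (nesym ba).
have split_by W : clopen W -> infinite_set (C `&` W `&` S) ->
    (exists2 p, (C `&` S) p & ~ W p) ->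
    exists C', [/\ clopen C', C' `<=` C, infinite_set (C' `&` S)
      & (C `\` C') `&` S !=set0].
  move=> cW iW [p [Cp Sp] nWp]; exists (C `&` W); split => //.
  - exact: clopenI.
  - by exists p; split => //; split => // -[].
have [finV|] := pselect (finite_set (C `&` V `&` S)); last first.
  by move=> iV; apply: (split_by V) => //; exists b; first split.
apply: (split_by (~` V)); first exact: clopenC set0 cV.
  move=> finNV; apply: iCS.
  have : finite_set ((C `&` V `&` S) `|` (C `&` ~` V `&` S)).
    by rewrite finite_setU.
  apply: sub_finite_set => x [Cx Sx].
  by have [Vx|nVx] := pselect (V x); [left|right].
by exists a.
Qed.

Lemma clopen_nested_sequence (S : set X) : infinite_set S ->
  exists C : nat -> set X, forall n,
    [/\ clopen (C n), C n.+1 `<=` C n & (C n `\` C n.+1) `&` S !=set0].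
Proof.
move=> iS.
have shrink C : exists C', clopen C -> infinite_set (C `&` S) ->
    [/\ clopen C', C' `<=` C, infinite_set (C' `&` S)
      & (C `\` C') `&` S !=set0].
  have [[cC iC]|nC] := pselect (clopen C /\ infinite_set (C `&` S)).
    by have [C' ?] := clopen_split_infinite cC iC; exists C'.
  by exists C => cC iC; exfalso; apply: nC.
have [next nextP] := choice shrink.
pose C n := iter n next setT.
have inv n : clopen (C n) /\ infinite_set (C n `&` S).
  elim: n => [|n [cn iN]]; first by split; [exact: clopenT | rewrite setTI].
  by have [] := nextP _ cn iN.
by exists C => n; have [cn iN] := inv n; have [] := nextP _ cn iN.
Qed.

Lemma isolating_sequence (I : Type) (D : set I) (A : I -> set X) :
  (forall i, D i -> finite_set (A i)) -> infinite_set (\bigcup_(i in D) A i) ->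
  exists (U : nat -> set X) (y : nat -> X) (i : nat -> I),
    trivIset setT U /\ forall n, [/\ clopen (U n), U n (y n), D (i n),
      A (i n) (y n) & forall z, U n z -> A (i n) z -> z = y n].
Proof.
move=> fA iS; have [C Cn] := clopen_nested_sequence iS.
have pick n : exists t : X * I * set X,
    [/\ ((C n `\` C n.+1) `&` t.2) t.1.1, D t.1.2, A t.1.2 t.1.1, clopen t.2
      & forall z, A t.1.2 z -> t.2 z -> z = t.1.1].
  have [_ _ [p [Qp [i Di Aip]]]] := Cn n.
  have [W [cW Wp Wiso]] := clopen_isolation p (fA i Di).
  by exists (p, i, W).
have [t tP] := choice pick.
exists (fun n => (C n `\` C n.+1) `&` (t n).2), (fun n => (t n).1.1),
  (fun n => (t n).1.2); split.
  by apply/trivIset_setIr/trivIset_nonincreasing_diff => n; case: (Cn n).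
move=> n; have [Up Di Aip cW Wiso] := tP n; split => //.
- have [[cCn _ _] [cCn1 _ _]] := (Cn n, Cn n.+1).
  rewrite setDE; apply: clopenI => //; apply: clopenI => //.
  exact: clopenC set0 cCn1.
- by move=> z [_ Wz] Az; exact: Wiso z Az Wz.
Qed.

End ZeroDimensional.

Definition zindic (X : topologicalType) (U : set X) (m : int) :
  {ptws X -> Zd} :=
  fun x => if `[< U x >] then m else 0.

Section IntegerIndicators.
Variable X : topologicalType.
Implicit Types (U : set X) (m : int).

Lemma zindic_in U m x : U x -> zindic U m x = m.
Proof. by move=> Ux; rewrite /zindic asboolT. Qed.

Lemma zindic_out U m x : ~ U x -> zindic U m x = 0.
Proof. by move=> nUx; rewrite /zindic asboolF. Qed.

Lemma zindic_continuous U m : clopen U -> in_CXZ (zindic U m).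
Proof.
move=> [oU cU] x; apply/discrete_cvg.
have [Ux|nUx] := pselect (U x).
  have : nbhs x U by apply: open_nbhs_nbhs; split.
  by apply: filterS => z Uz /=; rewrite !zindic_in.
have : nbhs x (~` U) by apply: open_nbhs_nbhs; split => //; exact: closed_openC.
by apply: filterS => z nUz /=; rewrite !zindic_out.
Qed.

Lemma Cp_compact_zindic (U : nat -> set X) (m : nat -> int) :
  trivIset setT U -> (forall n, clopen (U n)) ->
  Cp_compact ([set cst 0] `|` range (fun n => zindic (U n) (m n))).
Proof.
move=> trU cU; split.
  move=> _ [->|[n _ <-]]; first exact: cst_continuous.
  exact: zindic_continuous.
apply: compact_cvg_range; apply/pointwise_cvgP => x; apply/discrete_cvg.
apply: filterS (trivIset_eventually_notin x trU) => n nUx.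
by rewrite /= zindic_out.
Qed.

End IntegerIndicators.

Section Characters.
Variables (R : realType) (X : choiceType).
Implicit Types (w : X -> circle R) (f : X -> int).

Lemma supp_range w x : supp w x -> 0 < sval (w x) < 1.
Proof.
by rewrite /supp /= lt0r => ->; case/andP: (svalP (w x)) => -> ->.
Qed.

Lemma charval_eq0 w f : (forall x, supp w x -> f x = 0) -> charval w f = 0.
Proof. by move=> f0; rewrite /charval fsbig1 // => x /f0 ->; rewrite mulr0. Qed.

Lemma charval_supp1 w f y : finsupp w -> supp w y ->
  (forall x, supp w x -> x <> y -> f x = 0) ->
  charval w f = sval (w y) * (f y)%:~R.
Proof.
move=> fw wy f0; rewrite /charval (fsbigD1 y) //= fsbig1 ?addr0 //.
by move=> x [wx xy]; rewrite f0 ?mulr0.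
Qed.

End Characters.

Section CompactOpenTopology.
Variables (R : realType) (X : topologicalType).

Lemma tc_ball_open (K : set {ptws X -> Zd}) (r : R) (v : X -> circle R) :
  Cp_compact K -> tc_open [set u | exists2 e, 0 < e & tc_ball K (r - e) v u].
Proof.
move=> cK u _ [e e0 vu]; exists K, (e / 2); split => //; first exact: divr_gt0.
move=> u' _ uu'; exists (e / 2); first exact: divr_gt0.
move=> f Kf; have := Tdist_triangle (charval u' f) (charval u f) (charval v f).
by have := uu' f Kf; have := vu f Kf; lra.
Qed.

Lemma tc_compact_finite_net (D : set (X -> circle R)) (K : set {ptws X -> Zd})
    (r : R) : tc_compact D -> Cp_compact K -> 0 < r ->
  exists2 F : set X, finite_set F &
    forall w, D w -> exists2 v, supp v `<=` F & tc_ball K r v w.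
Proof.
move=> [finD cD] cK r0.
pose ball (v : {v : X -> circle R | finsupp v}) :=
  [set u | exists2 e, 0 < e & tc_ball K (r - e) (sval v) u].
have [|J fJ cover] :=
    cD _ ball (fun v => tc_ball_open (r := r) (v := sval v) cK).
  move=> w Dw; exists (exist _ w (finD w Dw)) => //.
  exists (r / 2); first exact: divr_gt0.
  by move=> f _; rewrite TdistE subrr distZ0; lra.
exists (\bigcup_(v in J) supp (sval v)).
  by apply: bigcup_finite fJ _ => v _; exact: (svalP v).
move=> w /cover[v Jv [e e0 vw]]; exists (sval v); first by move=> x; exists v.
by move=> f Kf; have := vw f Kf; lra.
Qed.

End CompactOpenTopology.

Theorem lemma6p4 (R : realType) (X : topologicalType)
  (hX : hausdorff_space X) (zX : clopen_base X)
  (D : set (X -> circle R)) :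
  tc_compact D -> finite_set (\bigcup_(w in D) supp w).
Proof.
move=> cD; apply: contrapT => iS.
have [U [y [w [trU Uw]]]] := isolating_sequence hX zX cD.1 iS.
have supp_y n : supp (w n) (y n) by case: (Uw n).
have [m far] :=
  choice (fun n => int_multiple_far_from_int (supp_range (supp_y n))).
pose f n := zindic (U n) (m n).
have cK : Cp_compact ([set cst 0] `|` range f).
  by apply: Cp_compact_zindic => // n; case: (Uw n).
have [F fF net] := tc_compact_finite_net (r := 1/4) cD cK ltac:(lra).
have [N _ UNF] :=
  near_forall_finite _ fF (fun x _ => trivIset_eventually_notin x trU).
have [_ UNy DwN _ Uiso] := Uw N.
have [v vF close] := net _ DwN.
have := close (f N) (or_intror (ex_intro2 _ _ N I erefl)).
rewrite (charval_eq0 (w := v) (f := f N)); last first.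
  by move=> x vx; apply/zindic_out/(UNF N (leqnn N) x (vF x vx)).
rewrite (charval_supp1 (f := f N) (cD.1 _ DwN) (supp_y N)); last first.
  by move=> x wx xy; apply/zindic_out => /Uiso/(_ wx).
rewrite /f zindic_in // TdistE subr0 mulrC.
by have := far N; lra.
Qed.
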